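(* Let $p,q$ be consecutive patterns of length 4 satisfying the standing assumptions below. Let $n\ge1$, $S,U\subseteq[n]$, and let $\epsilon\in I_n$ with $\operatorname{Em}(q,\epsilon)=S$ and $\operatorname{Em}(p,\epsilon)=U$. Then $\operatorname{Em}(p,\phi^{-1}_{\ge S}(\epsilon))\subseteq S\cup U$.
   Context: An inversion sequence of length $n$ is an integer sequence $\epsilon_1\cdots\epsilon_n$ with $0\le\epsilon_i<i$; $I_n$ is the set of them. The reduction of an integer word replaces each occurrence of its $k$-th smallest distinct value by $k-1$. A consecutive pattern $p=\underline{p_1p_2p_3p_4}$ occurs in $\epsilon$ at position $i$ if the reduction of $\epsilon_i\epsilon_{i+1}\epsilon_{i+2}\epsilon_{i+3}$ is $p_1p_2p_3p_4$; $\operatorname{Em}(p,\epsilon)$ is the set of such $i$. A pattern is non-overlapping if no two of its occurrences in any sequence overlap in more than one entry (i.e. no two occurrences are at positions differing by 1 or 2). Standing assumptions: $p$ and $q$ are each non-overlapping, agree in their first entries and in their last entries, have the same maximum entry $d$, and each contains every value in $\{0,\dots,d\}$. Change operation: if $p$ occurs in $\epsilon$ at $i$, let $f$ be the order-preserving bijection from $\{0,\dots,d\}$ onto the set of values $\{\epsilon_i,\dots,\epsilon_{i+3}\}$, so that $\epsilon_{i+j-1}=f(p_j)$; changing this occurrence to $q$ means replacing $\epsilon_{i+j-1}$ by $f(q_j)$ for $j=1,\dots,4$ (and symmetrically for changing an occurrence of $q$ to $p$). It is assumed that $p$ and $q$ are interchangeable, i.e. such changes (in either direction) applied to an inversion sequence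 always yield an inversion sequence. For $T\subseteq[n]$, let $I_{n,p}(\supseteq T)=\{\epsilon\in I_n:\operatorname{Em}(p,\epsilon)\supseteq T\}$ and similarly for $q$; $\phi_{\ge T}:I_{n,p}(\supseteq T)\to I_{n,q}(\supseteq T)$ changes the occurrences of $p$ at all positions in $T$ to occurrences of $q$, and it is assumed to be a bijection whose inverse $\phi^{-1}_{\ge T}$ changes the occurrences of $q$ at all positions in $T$ to occurrences of $p$. *)

From mathcomp Require Import all_boot.
Set Implicit Arguments. Unset Strict Implicit. Unset Printing Implicit Defensive.

(* Words/sequences are seq nat; positions are 1-based as in the paper. *)

Definition inv_seq (n : nat) (e : seq nat) : Prop :=
  size e = n /\ forall k, k < n -> nth 0 e k < k.+1.

(* reduction: each occurrence of the k-th smallest distinct value becomes k-1,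
   i.e. x is replaced by the number of distinct values of w below x *)
Definition red (w : seq nat) : seq nat :=
  [seq size (undup [seq y <- w | y < x]) | x <- w].

Definition window (w : seq nat) (i : nat) : seq nat := take 4 (drop i.-1 w).

Definition occurs (p w : seq nat) (i : nat) : bool :=
  [&& 1 <= i, i + 3 <= size w & red (window w i) == p].

Definition Em (p w : seq nat) : pred nat := occurs p w.

Definition pmax (p : seq nat) : nat := \max_(x <- p) x.

Definition non_overlapping (p : seq nat) : Prop :=
  forall (w : seq nat) (i j : nat), occurs p w i -> occurs p w j -> i < j -> 3 <= j - i.

(* change an occurrence of p at position i into q: f is the order-preserving
   bijection {0..d} -> set of values of the window, f r = (r+1)-th smallest value *)
Definition change (p q : seq nat) (i : nat) (w : seq nat) : seq nat :=
  if occurs p w i then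
    let vals := sort leq (undup (window w i)) in
    take i.-1 w ++ [seq nth 0 vals r | r <- q] ++ drop (i + 3) w
  else w.

(* phi_{>=T}: change the occurrences of p at all positions of T (within 1..size w)
   into occurrences of q (performed successively, in increasing order of position) *)
Definition change_all (p q : seq nat) (T : pred nat) (w : seq nat) : seq nat :=
  foldl (fun w' i => change p q i w') w [seq i <- iota 1 (size w) | T i].

Definition standing (p q : seq nat) : Prop :=
  [/\ size p = 4 /\ size q = 4,
      non_overlapping p /\ non_overlapping q,
      head 0 p = head 0 q /\ last 0 p = last 0 q,
      pmax p = pmax q /\
      (forall v, v <= pmax p -> v \in p) /\ (forall v, v <= pmax q -> v \in q) &
      (forall n e i, inv_seq n e -> occurs p e i -> inv_seq n (change p q i e)) /\
      (forall n e i, inv_seq n e -> occurs q e i -> inv_seq n (change q p i e))].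

(* phi_{>=T} : I_{n,p}(⊇T) -> I_{n,q}(⊇T) is a bijection with inverse phi^{-1}_{>=T} *)
Definition phi_bijective (p q : seq nat) : Prop :=
  forall (n : nat) (T : pred nat), (forall i, T i -> 1 <= i <= n) ->
    (forall e, inv_seq n e -> {subset T <= Em p e} ->
       [/\ inv_seq n (change_all p q T e), {subset T <= Em q (change_all p q T e)}
         & change_all q p T (change_all p q T e) = e]) /\
    (forall e, inv_seq n e -> {subset T <= Em q e} ->
       [/\ inv_seq n (change_all q p T e), {subset T <= Em p (change_all q p T e)}
         & change_all p q T (change_all q p T e) = e]).

(* Changing an occurrence of q at position j into p only alters the entries
   j+1 and j+2, because p and q agree in their first and last letters.  After
   phi^{-1}_{>=S} every j in S carries an occurrence of p, so a further
   occurrence of p at some i outside S is at distance at least 3 from all of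
   them by non-overlap; its window was therefore not touched, and it was
   already an occurrence of p in the original sequence. *)

From mathcomp Require Import all_boot zify.

Lemma nth_sorted_ltn_count (s : seq nat) a : sorted ltn s -> a \in s ->
  nth 0 s (count (ltn^~ a) s) = a.
Proof.
elim: s => [|h t IHt] //= sorted_hs; rewrite inE => /orP [/eqP ->|a_t].
  rewrite ltnn add0n (eq_in_count (a2 := pred0)) ?count_pred0 // => y y_t /=.
  by rewrite ltnNge ltnW // (allP (order_path_min ltn_trans sorted_hs)).
have h_lt_a : h < a := allP (order_path_min ltn_trans sorted_hs) a a_t.
by rewrite h_lt_a; exact: IHt (path_sorted sorted_hs) a_t.
Qed.

Lemma nth_sort_undup_rank (x : seq nat) a : a \in x ->
  nth 0 (sort leq (undup x)) (size (undup [seq y <- x | y < a])) = a.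
Proof.
move=> a_x.
have perm_sorted : perm_eq (sort leq (undup x)) (undup x) by rewrite perm_sort.
rewrite -filter_undup size_filter -(permP perm_sorted) nth_sorted_ltn_count //.
  rewrite ltn_sorted_uniq_leq (perm_uniq perm_sorted) undup_uniq.
  exact: sort_sorted leq_total _.
by rewrite (perm_mem perm_sorted) mem_undup.
Qed.

Lemma nth_window w i m : m < 4 -> nth 0 (window w i) m = nth 0 w (i.-1 + m).
Proof. by move=> m_lt4; rewrite nth_take // nth_drop. Qed.

Lemma size_window w i : 1 <= i -> i + 3 <= size w -> size (window w i) = 4.
Proof. by move=> i_gt0 i_le; rewrite size_takel // size_drop; lia. Qed.

Lemma eq_occurs p w w' i : size w = size w' -> window w i = window w' i ->
  occurs p w i = occurs p w' i.
Proof. by rewrite /occurs => -> ->. Qed.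

Lemma size_occurs p w i : occurs p w i -> size p = 4.
Proof.
by case/and3P=> i_gt0 i_le /eqP <-; rewrite size_map size_window.
Qed.

Lemma non_overlapping_far p w i j : non_overlapping p ->
  occurs p w i -> occurs p w j -> i != j -> (i + 3 <= j) || (j + 3 <= i).
Proof.
move=> no_p p_i p_j; case: (ltngtP i j) => [i_lt_j|j_lt_i|->] _ //.
- by have := no_p _ _ _ p_i p_j i_lt_j; lia.
- by have := no_p _ _ _ p_j p_i j_lt_i; lia.
Qed.

(* In the paper's notation, f(p_m) = eps_{i+m}. *)
Lemma nth_values_occurs p w i m : occurs p w i -> m < 4 ->
  nth 0 (sort leq (undup (window w i))) (nth 0 p m) = nth 0 w (i.-1 + m).
Proof.
case/and3P=> i_gt0 i_le /eqP red_p m_lt4.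
have size_w4 : size (window w i) = 4 by rewrite size_window.
rewrite -red_p (nth_map 0) ?size_w4 // nth_sort_undup_rank ?nth_window //.
by rewrite -nth_window // mem_nth ?size_w4.
Qed.

Section ChangeOutsideInterior.

Variables p q : seq nat.
Hypothesis size_q : size q = 4.

Lemma size_change i w : size (change p q i w) = size w.
Proof.
rewrite /change; case: ifP => // /and3P [i_gt0 i_le _].
by rewrite !size_cat size_map size_takel ?size_drop; lia.
Qed.

Lemma size_change_all (T : pred nat) w : size (change_all p q T w) = size w.
Proof.
rewrite /change_all; move: [seq i <- _ | T i] => l.
elim: l w => [|j l IHl] w //=.
by rewrite IHl size_change.
Qed.

Hypothesis head_pq : head 0 p = head 0 q.
Hypothesis last_pq : last 0 p = last 0 q.

Lemma nth_change i w k : k != i -> k != i.+1 ->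
  nth 0 (change p q i w) k = nth 0 w k.
Proof.
move=> k_ne_i k_ne_i1; rewrite /change; case: ifP => // p_i.
have /and3P [i_gt0 i_le _] := p_i.
have size_p : size p = 4 by apply: size_occurs p_i.
have keep_end m : m < 4 -> nth 0 p m = nth 0 q m ->
    nth 0 [seq nth 0 (sort leq (undup (window w i))) r | r <- q] m
    = nth 0 w (i.-1 + m).
  by move=> m_lt4 pq_m; rewrite (nth_map 0) ?size_q // -pq_m nth_values_occurs.
rewrite nth_cat size_takel; last lia.
case: ltnP => [k_lt|k_ge]; first by rewrite nth_take.
rewrite nth_cat size_map size_q; case: ltnP => [k_lt|k_ge']; last first.
  by rewrite nth_drop; congr nth; lia.
have [k_first|k_last] : k - i.-1 = 0 \/ k - i.-1 = 3 by lia.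
- by rewrite k_first keep_end //; congr nth; lia.
- rewrite k_last keep_end //; first by congr nth; lia.
  by rewrite -[3]/(4.-1) -{1}size_p -size_q !nth_last.
Qed.

Lemma nth_change_all (T : pred nat) w k :
  (forall j, T j -> (k != j) && (k != j.+1)) ->
  nth 0 (change_all p q T w) k = nth 0 w k.
Proof.
move=> far_T; rewrite /change_all.
move: (iota 1 (size w)) => l; elim: l w => [|j l IHl] w //=.
case: ifP => //= T_j.
by rewrite IHl nth_change //; case/andP: (far_T j T_j).
Qed.

Lemma window_change_all (T : pred nat) w i : 0 < i ->
  (forall j, T j -> (i + 3 <= j) || (j + 3 <= i)) ->
  window (change_all p q T w) i = window w i.
Proof.
move=> i_gt0 far_T; apply: (@eq_from_nth _ 0) => [|m].
  by rewrite !size_take !size_drop size_change_all.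
rewrite size_take size_drop size_change_all => m_lt.
have m_lt4 : m < 4 by move: m_lt; case: ifP; lia.
rewrite !nth_window // nth_change_all // => j /far_T; lia.
Qed.

End ChangeOutsideInterior.

Theorem lemma1 (p q : seq nat) (n : nat) (S U : pred nat) (e : seq nat) :
  standing p q -> phi_bijective p q ->
  1 <= n ->
  (forall i, S i -> 1 <= i <= n) -> (forall i, U i -> 1 <= i <= n) ->
  inv_seq n e ->
  Em q e =1 S -> Em p e =1 U ->
  forall i, Em p (change_all q p S e) i -> S i || U i.
Proof.
move=> [[size_p _] [no_p _] [head_pq last_pq] _ _] phi_bij _ S_range _ inv_e
  Em_q Em_p i p_i.
case S_i: (S i) => //=; rewrite -Em_p.
have q_on_S : {subset S <= Em q e} by move=> j; rewrite !unfold_in /= -Em_q.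
have [_ p_on_S _] := (phi_bij n S S_range).2 e inv_e q_on_S.
have far_S j : S j -> (i + 3 <= j) || (j + 3 <= i).
  move=> S_j; apply: non_overlapping_far no_p p_i (p_on_S j S_j) _.
  by apply: contraFneq S_i => ->.
have [i_gt0 _ _] := and3P p_i.
move: p_i; rewrite /Em (eq_occurs p _ _ _ (size_change_all q p size_p S e)) //.
exact: window_change_all.
Qed.
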